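(* Let $G$ be a forest. Then the independence complex $\Delta(G)$ is sortable if and only if each connected component (tree) of $G$ is a path graph.
   Context: The independence complex $\Delta(G)$ is the simplicial complex of all independent sets of $G$. For finite $F,G\subset\mathbb{N}$ with $|F|=r,|G|=s$, write $\mathbf{x}^F\mathbf{x}^G=x_{i_1}\cdots x_{i_{r+s}}$ with $i_1\le\cdots\le i_{r+s}$ (where $\mathbf{x}^F=\prod_{i\in F}x_i$) and set $\mathrm{sort}(F,G)=(\{i_k:k\text{ odd}\},\{i_k:k\text{ even}\})$. A simplicial complex $\Delta$ with $V(\Delta)\subset\mathbb{N}$ is sortable with respect to the given labeling if $\mathrm{sort}(F,G)\in\Delta\times\Delta$ for all $F,G\in\Delta$; $\Delta$ is sortable if it is sortable with respect to some labeling of its vertices by distinct integers. *)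

From mathcomp Require Import all_boot.
Set Implicit Arguments. Unset Strict Implicit. Unset Printing Implicit Defensive.

(* A simple graph is a symmetric irreflexive relation e on a finite vertex type T. *)

(* Independent sets of G: the faces of the independence complex Delta(G). *)
Definition indep (T : finType) (e : rel T) (F : {set T}) : bool :=
  [forall x in F, forall y in F, ~~ e x y].

Definition forest (T : finType) (e : rel T) : Prop :=
  forall c : seq T, 3 <= size c -> ~~ ucycleb e c.

Definition component (T : finType) (e : rel T) (x : T) : {set T} :=
  [set y | connect e x y].

Definition is_path_graph (T : finType) (e : rel T) (C : {set T}) : Prop :=
  exists p : seq T,
    [/\ uniq p, (forall x, (x \in C) = (x \in p)) &
        forall x y, x \in C -> y \in C ->
          (e x y <-> exists2 i, i.+1 < size p &
             ((nth x p i == x) && (nth x p i.+1 == y)) ||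
             ((nth x p i == y) && (nth x p i.+1 == x)))].

(* Labels of the vertices of F, sorted with multiplicity after merging two sets:
   x^F x^G = x_{i_1} ... x_{i_{r+s}} with i_1 <= ... <= i_{r+s}. *)
Definition merged_labels (T : finType) (lab : T -> nat) (F G : {set T}) : seq nat :=
  sort leq ([seq lab x | x in F] ++ [seq lab x | x in G]).

(* {i_k : k odd} and {i_k : k even} (1-indexed positions k). *)
Definition odd_pos (s : seq nat) : seq nat :=
  [seq nth 0 s k | k <- iota 0 (size s) & ~~ odd k].
Definition even_pos (s : seq nat) : seq nat :=
  [seq nth 0 s k | k <- iota 0 (size s) & odd k].

(* sort(F,G), transported back to vertex sets through the (injective) labeling. *)
Definition sort1 (T : finType) (lab : T -> nat) (F G : {set T}) : {set T} :=
  [set x | lab x \in odd_pos (merged_labels lab F G)].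
Definition sort2 (T : finType) (lab : T -> nat) (F G : {set T}) : {set T} :=
  [set x | lab x \in even_pos (merged_labels lab F G)].

Definition sortable_wrt (T : finType) (e : rel T) (lab : T -> nat) : Prop :=
  forall F G : {set T}, indep e F -> indep e G ->
    indep e (sort1 lab F G) /\ indep e (sort2 lab F G).

Definition ind_complex_sortable (T : finType) (e : rel T) : Prop :=
  exists lab : T -> nat, injective lab /\ sortable_wrt e lab.

From mathcomp Require Import all_boot.
From mathcomp Require Import zify.
From Stdlib Require Import ClassicalEpsilon.
Set Implicit Arguments. Unset Strict Implicit. Unset Printing Implicit Defensive.

(* (<=) Number the vertices consecutively along each path component, giving
   each component its own block of labels.  Then every edge joins labels
   a and a+1.  For independent F and G, each of a, a+1 occurs at most once in
   the sorted merge x^F x^G (an edge lies in neither F nor G), so the two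
   occurrences sit at consecutive positions and go to different halves of
   sort(F,G); hence both halves are independent.  This holds for any graph.

   (=>) Sorting F = {v} with G = {a,b,c} shows that in a sortable complex no
   vertex has three pairwise non-adjacent neighbours.  A forest has no
   triangles, so sortability forces maximum degree two.  In a forest of
   maximum degree two, a non-extendable simple path inside a component covers
   the component (an edge leaving it at an inner vertex would be a third
   edge there) and has no chords (a chord closes a cycle), so it exhibits the
   component as a path graph. *)

Lemma count_mem_two_positions (s : seq nat) k m a :
  k < m -> m < size s -> nth 0 s k = a -> nth 0 s m = a -> 1 < count_mem a s.
Proof.
move=> km ms hk hm.
rewrite -(cat_take_drop m s) count_cat (drop_nth 0 ms) /= hm eqxx.
have a_take : a \in take m s.
  by rewrite -hk -(nth_take 0 km); apply: mem_nth; rewrite size_take ms.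
move: a_take; rewrite -has_pred1 has_count => pos.
by rewrite addnCA add1n ltnS (leq_trans pos (leq_addr _ _)).
Qed.

Lemma sorted_succ_position (s : seq nat) k k' a :
  sorted leq s -> k < size s -> k' < size s ->
  nth 0 s k = a -> nth 0 s k' = a.+1 ->
  count_mem a s <= 1 -> count_mem a.+1 s <= 1 -> k' = k.+1.
Proof.
move=> ss ks k's hk hk' ca ca1.
have mono := sorted_leq_nth leq_trans leqnn 0 ss.
have kk' : k < k'.
  rewrite ltnNge; apply/negP => le.
  by have := mono k' k k's ks le; rewrite hk hk'; lia.
have [// | ne] := eqVneq k' k.+1.
have m1 : k.+1 < k' by lia.
have ms : k.+1 < size s by lia.
have h1 := mono k k.+1 ks ms (leqnSn k).
have h2 := mono k.+1 k' ms k's (ltnW m1).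
rewrite hk in h1; rewrite hk' in h2.
have [e1|e2] : nth 0 s k.+1 = a \/ nth 0 s k.+1 = a.+1 by lia.
- by have := count_mem_two_positions (ltnSn k) ms hk e1; lia.
- by have := count_mem_two_positions m1 k's e2 hk'; lia.
Qed.

Lemma odd_posP s a : a \in odd_pos s ->
  exists2 k, k < size s & ~~ odd k /\ nth 0 s k = a.
Proof.
by case/mapP => k; rewrite mem_filter mem_iota add0n => /andP[ok /andP[_ ks]] ->; exists k.
Qed.

Lemma even_posP s a : a \in even_pos s ->
  exists2 k, k < size s & odd k /\ nth 0 s k = a.
Proof.
by case/mapP => k; rewrite mem_filter mem_iota add0n => /andP[ok /andP[_ ks]] ->; exists k.
Qed.

Lemma same_half_partner (s : seq nat) t : size s = 4 -> uniq s -> t \in s ->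
  exists2 t', t' \in s & t' != t /\
    ((t \in odd_pos s) && (t' \in odd_pos s) ||
     (t \in even_pos s) && (t' \in even_pos s)).
Proof.
case: s => [|s0 [|s1 [|s2 [|s3 []]]]] // _.
rewrite /odd_pos /even_pos /= !inE !negb_or.
move=> /and4P[/and3P[n01 n02 n03] /andP[n12 n13] n23 _].
case/or4P=> /eqP ->.
- by exists s2; rewrite ?inE ?eqxx ?orbT // eq_sym.
- by exists s3; rewrite ?inE ?eqxx ?orbT // eq_sym.
- by exists s0; rewrite ?inE ?eqxx ?orbT.
- by exists s1; rewrite ?inE ?eqxx ?orbT.
Qed.

Lemma indepP (T : finType) (e : rel T) (F : {set T}) x y :
  indep e F -> x \in F -> y \in F -> ~~ e x y.
Proof. by move=> /forall_inP indF xF yF; move/forall_inP: (indF x xF) => /(_ y yF). Qed.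

Section MergedLabels.
Variables (T : finType) (lab : T -> nat).
Hypothesis labI : injective lab.

Lemma mem_merged (F G : {set T}) x :
  (lab x \in merged_labels lab F G) = (x \in F) || (x \in G).
Proof. by rewrite /merged_labels mem_sort mem_cat !(mem_map labI) !mem_enum. Qed.

Lemma count_merged (F G : {set T}) x :
  count_mem (lab x) (merged_labels lab F G) = (x \in F) + (x \in G).
Proof.
rewrite /merged_labels count_sort count_cat !count_map.
have count_set (A : {set T}) : count (preim lab (pred1 (lab x))) (enum A) = (x \in A).
  rewrite (eq_count (a2 := pred1 x)); last by move=> z /=; rewrite (inj_eq labI).
  by rewrite count_uniq_mem ?enum_uniq // mem_enum.
by rewrite !count_set.
Qed.

Lemma merged_sorted (F G : {set T}) : sorted leq (merged_labels lab F G).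
Proof. exact/sort_sorted/leq_total. Qed.

Lemma sort_separates_consecutive (F G : {set T}) x y :
  lab y = (lab x).+1 ->
  ~~ ((x \in F) && (y \in F)) -> ~~ ((x \in G) && (y \in G)) ->
  ~~ ((x \in sort1 lab F G) && (y \in sort1 lab F G)) /\
  ~~ ((x \in sort2 lab F G) && (y \in sort2 lab F G)).
Proof.
move=> lxy nF nG; set s := merged_labels lab F G.
have apart k k' : k < size s -> k' < size s ->
    nth 0 s k = lab x -> nth 0 s k' = lab y -> odd k' = ~~ odd k.
  move=> ks k's hk hk'.
  have /[!mem_merged] xs : lab x \in s by rewrite -hk mem_nth.
  have /[!mem_merged] ys : lab y \in s by rewrite -hk' mem_nth.
  have cx : count_mem (lab x) s <= 1.
    by rewrite count_merged; move: xs ys nF nG;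
      case: (x \in F); case: (x \in G); case: (y \in F); case: (y \in G).
  have cy : count_mem (lab x).+1 s <= 1.
    by rewrite -lxy count_merged; move: xs ys nF nG;
      case: (x \in F); case: (x \in G); case: (y \in F); case: (y \in G).
  rewrite lxy in hk'.
  by rewrite (sorted_succ_position (merged_sorted F G) ks k's hk hk' cx cy).
split; apply/negP; rewrite !inE => /andP[].
- move=> /odd_posP[k ks [ok hk]] /odd_posP[k' k's [ok' hk']].
  by move: ok'; rewrite (apart k k') // ok.
- move=> /even_posP[k ks [ok hk]] /even_posP[k' k's [ok' hk']].
  by move: ok'; rewrite (apart k k') // ok.
Qed.

Lemma sortable_of_consecutive_edges (e : rel T) :
  symmetric e ->
  (forall x y, e x y -> lab y = (lab x).+1 \/ lab x = (lab y).+1) ->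
  sortable_wrt e lab.
Proof.
move=> esym adj F G iF iG.
have separated x y : e x y -> lab y = (lab x).+1 ->
    ~~ ((x \in sort1 lab F G) && (y \in sort1 lab F G)) /\
    ~~ ((x \in sort2 lab F G) && (y \in sort2 lab F G)).
  move=> exy lxy; apply: sort_separates_consecutive => //; apply/negP => /andP[xA yA].
  - by move: (indepP iF xA yA); rewrite exy.
  - by move: (indepP iG xA yA); rewrite exy.
have no_edge (S : {set T}) : (forall x y, e x y -> lab y = (lab x).+1 ->
    ~~ ((x \in S) && (y \in S))) -> indep e S.
  move=> sepS; apply/forall_inP => x xS; apply/forall_inP => y yS; apply/negP => exy.
  case: (adj x y exy) => lxy.
  - by move/negP: (sepS x y exy lxy); rewrite xS yS.
  - by rewrite esym in exy; move/negP: (sepS y x exy lxy); rewrite xS yS.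
by split; apply: no_edge => x y exy lxy; case: (separated x y exy lxy).
Qed.

End MergedLabels.

Section PathLayouts.
Variables (T : finType) (e : rel T).
Hypothesis esym : symmetric e.
Hypothesis paths : forall x : T, is_path_graph e (component e x).

Let connect_esym : connect_sym e := sym_connect_sym esym.

(* The path ordering of the component of x, chosen once per component
   through its canonical root. *)
Definition layout (x : T) : seq T :=
  sval (constructive_indefinite_description _ (paths (root e x))).

Lemma component_root x : component e (root e x) = component e x.
Proof.
apply/setP => z; rewrite !inE.
by rewrite (same_connect connect_esym (connect_root e x)) connect_esym.
Qed.

Lemma layout_spec x :
  [/\ uniq (layout x), forall y, (y \in component e x) = (y \in layout x) &
      forall y z, y \in component e x -> z \in component e x ->
        (e y z <-> exists2 i, i.+1 < size (layout x) &
           ((nth y (layout x) i == y) && (nth y (layout x) i.+1 == z)) ||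
           ((nth y (layout x) i == z) && (nth y (layout x) i.+1 == y)))].
Proof.
rewrite -component_root /layout.
by case: (constructive_indefinite_description _ _).
Qed.

Lemma mem_layout x : x \in layout x.
Proof. by case: (layout_spec x) => _ <- _; rewrite inE connect0. Qed.

Lemma index_layout_small x : index x (layout x) < #|T|.+1.
Proof.
case: (layout_spec x) => u _ _; rewrite ltnS (leq_trans (index_size _ _)) //.
by rewrite -(card_uniqP u) max_card.
Qed.

Definition path_label (x : T) : nat :=
  enum_rank (root e x) * #|T|.+1 + index x (layout x).

Lemma path_label_inj : injective path_label.
Proof.
move=> x y; rewrite /path_label => E.
have ix := index_layout_small x; have iy := index_layout_small y.
have rank_eq : nat_of_ord (enum_rank (root e x)) = enum_rank (root e y) by nia.
have idx_eq : index x (layout x) = index y (layout y) by nia.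
have root_eq : root e x = root e y by apply/enum_rank_inj/val_inj.
rewrite -(nth_index x (mem_layout x)) idx_eq /layout root_eq -/(layout y).
by rewrite nth_index ?mem_layout.
Qed.

Lemma path_label_edge x y :
  e x y -> path_label y = (path_label x).+1 \/ path_label x = (path_label y).+1.
Proof.
move=> exy.
have root_eq : root e y = root e x 
  by apply/(rootP connect_esym); rewrite connect_esym connect1.
have layout_eq : layout y = layout x by rewrite /layout root_eq.
have xC : x \in component e x by rewrite inE connect0.
have yC : y \in component e x by rewrite inE connect1.
case: (layout_spec x) => u _ adj.
case: ((adj x y xC yC).1 exy) => i ip /orP[] /andP[/eqP h1 /eqP h2].
- have i1 : index x (layout x) = i by rewrite -{1}h1 index_uniq // ltnW.
  have i2 : index y (layout x) = i.+1 by rewrite -{1}h2 index_uniq.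
  by left; rewrite /path_label root_eq -/(layout y) layout_eq i1 i2 addnS.
- have i1 : index y (layout x) = i by rewrite -{1}h1 index_uniq // ltnW.
  have i2 : index x (layout x) = i.+1 by rewrite -{1}h2 index_uniq.
  by right; rewrite /path_label root_eq -/(layout y) layout_eq i1 i2 addnS.
Qed.

Lemma sortable_of_path_components : ind_complex_sortable e.
Proof.
exists path_label; split; first exact: path_label_inj.
exact: (sortable_of_consecutive_edges path_label_inj esym path_label_edge).
Qed.

End PathLayouts.

Definition max_degree_two (T : finType) (e : rel T) : Prop :=
  forall v a b c, e v a -> e v b -> e v c -> a != b -> a != c -> b != c -> False.

Section NoClaw.
Variables (T : finType) (e : rel T).
Hypotheses (esym : symmetric e) (eirr : irreflexive e).

Lemma edge_neq x y : e x y -> x != y.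
Proof. by move=> exy; apply/eqP => E; move: exy; rewrite E eirr. Qed.

(* Sortability forbids an induced claw: sorting F = {v} with G = {a, b, c}
   puts v in the same half as one of its neighbours. *)
Lemma sortable_no_claw (lab : T -> nat) : injective lab -> sortable_wrt e lab ->
  forall v a b c, e v a -> e v b -> e v c -> a != b -> a != c -> b != c ->
  ~~ e a b -> ~~ e a c -> ~~ e b c -> False.
Proof.
move=> labI srt v a b c va vb vc ab ac bc nab nac nbc.
set F := [set v]; set G := [set a; b; c].
have iF : indep e F.
  apply/forall_inP => x /set1P ->; apply/forall_inP => y /set1P ->.
  by rewrite eirr.
have iG : indep e G.
  apply/forall_inP => x; rewrite !inE => hx; apply/forall_inP => y; rewrite !inE.
  by case/orP: hx => [/orP[]|] /eqP-> => [/orP[/orP[]|]|/orP[/orP[]|]|/orP[/orP[]|]] /eqP->;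
    rewrite ?eirr // esym.
have vG : v \notin G.
  by rewrite !inE !negb_or !(edge_neq va, edge_neq vb, edge_neq vc).
set s := merged_labels lab F G.
have us : uniq s.
  rewrite /s /merged_labels sort_uniq cat_uniq !(map_inj_uniq labI) !enum_uniq /= andbT.
  apply/hasPn => t /mapP[y]; rewrite mem_enum => yG ->.
  apply/mapP => [[z]]; rewrite mem_enum inE => /eqP -> /labI E.
  by move: vG; rewrite -E yG.
have szs : size s = 4.
  rewrite /s /merged_labels size_sort size_cat !size_map -!cardE cards1.
  by rewrite /G -setUA !cardsU1 cards1 !inE negb_or ab ac bc.
have vs : lab v \in s by rewrite mem_merged // inE eqxx.
have [t' t's [t'v same]] := same_half_partner szs us vs.
move: t's t'v; rewrite /s /merged_labels mem_sort mem_cat => /orP[] /mapP[y].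
  by rewrite mem_enum => /set1P -> ->; rewrite eqxx.
rewrite mem_enum => yG t'E _; rewrite {t'}t'E in same.
have vy : e v y by move: yG; rewrite !inE => /orP[/orP[]|] /eqP->.
case: (srt F G iF iG) => i1 i2.
by case/orP: same => /andP[vS yS];
  [move: (indepP i1 (x := v) (y := y)) | move: (indepP i2 (x := v) (y := y))];
  rewrite !inE vS yS vy => /(_ isT isT).
Qed.

End NoClaw.

Section Forest.
Variables (T : finType) (e : rel T).
Hypotheses (esym : symmetric e) (eirr : irreflexive e) (hforest : forest e).

Lemma forest_no_cycle a m :
  path e a m -> e (last a m) a -> uniq (a :: m) -> 2 <= size m -> False.
Proof.
move=> pm la u sm; have := hforest (c := a :: m) sm.
by move: u; rewrite /ucycleb /= rcons_path pm la => ->.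
Qed.

Lemma forest_no_triangle u v w : e u v -> e v w -> e w u -> False.
Proof.
move=> uv vw wu; apply: (forest_no_cycle (a := u) (m := [:: v; w])) => //=.
- by rewrite uv vw.
- by rewrite !inE negb_or (edge_neq eirr uv) eq_sym (edge_neq eirr wu) (edge_neq eirr vw).
Qed.

(* A sortable forest has maximum degree two: the neighbours of a vertex are
   pairwise non-adjacent (no triangles), so three of them would form a claw. *)
Lemma sortable_forest_max_degree_two (lab : T -> nat) :
  injective lab -> sortable_wrt e lab -> max_degree_two e.
Proof.
move=> labI srt v a b c va vb vc ab ac bc.
have apart x y : e v x -> e v y -> ~~ e x y.
  by move=> vx vy; apply/negP => xy; apply: (forest_no_triangle vx xy); rewrite esym.
exact: (sortable_no_claw esym eirr labI srt va vb vc ab ac bc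
         (apart _ _ va vb) (apart _ _ va vc) (apart _ _ vb vc)).
Qed.

(* A path without repetition has no chords: an edge between positions i < j
   forces j = i + 1, since otherwise it would close a cycle. *)
Lemma path_no_chord (p : seq T) d i j : sorted e p -> uniq p -> i < j -> j < size p ->
  e (nth d p j) (nth d p i) -> j = i.+1.
Proof.
move=> sp up ij jp ji.
have [// | /eqP nj] := eqVneq j i.+1; exfalso.
have ip : i < size p by lia.
have dn : drop i p = nth d p i :: drop i.+1 p by rewrite (drop_nth d ip).
have sd : path e (nth d p i) (drop i.+1 p).
  by rewrite -[path _ _ _]/(sorted e (nth d p i :: _)) -dn; exact: drop_sorted.
set m := take (j - i) (drop i.+1 p).
have szm : size m = j - i by rewrite size_takel // size_drop; lia.
have ec : nth d p i :: m = take (j - i).+1 (drop i p) by rewrite dn.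
apply: (forest_no_cycle (a := nth d p i) (m := m)).
- exact: take_path.
- rewrite (last_nth (nth d p i)) ec szm nth_take // nth_drop.
  by rewrite (set_nth_default d) ?subnKC //; lia.
- by rewrite ec take_uniq // drop_uniq.
- by rewrite szm; lia.
Qed.

End Forest.

Lemma connect_exit_edge (T : finType) (e : rel T) (S : pred T) u v :
  connect e u v -> S u -> ~~ S v -> exists x y, [/\ S x, ~~ S y & e x y].
Proof.
case/connectP => q; elim: q u => [|z q IH] u /= => [_ -> Sv /negP //|].
case/andP => uz pq lv Su nSv.
case Sz: (S z); first exact: (IH z pq lv Sz nSv).
by exists u, z; rewrite Su Sz uz.
Qed.

Lemma path_nth_edge (T : Type) (e : rel T) a s d i : path e a s -> i.+1 < size (a :: s) ->
  e (nth d (a :: s) i) (nth d (a :: s) i.+1).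
Proof.
move=> /pathP adj hi; have := adj a i hi.
by rewrite (set_nth_default d a) 1?(set_nth_default d a (s := s)) // /= ltnW.
Qed.

Section MaximalPath.
Variables (T : finType) (e : rel T) (x0 : T).
Hypothesis esym : symmetric e.

Definition component_path (a : T) (s : seq T) : bool :=
  [&& path e a s, uniq (a :: s) & all (connect e x0) (a :: s)].

(* Extending a simple path at either end while possible yields a path that
   cannot be extended; n bounds the number of extensions still possible. *)
Lemma maximal_component_path n a s : #|T| - size s <= n -> component_path a s ->
  exists a' s', [/\ component_path a' s', (forall w, e a' w -> w \in a' :: s') &
                    (forall w, e (last a' s') w -> w \in a' :: s')].
Proof.
elim: n a s => [|n IH] a s hn cp; case/and3P: (cp) => ps us cs;
  have sz : size (a :: s) <= #|T| by rewrite -(card_uniqP us) max_card.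
  by move: hn sz => /=; lia.
case: (pickP (fun w => e a w && (w \notin a :: s))) => [w /andP[aw wn]|no_head].
  apply: (IH w (a :: s)); first by move: hn sz => /=; lia.
  apply/and3P; split; first by rewrite /= esym aw ps.
    by rewrite cons_uniq wn us.
  apply/andP; split; last exact: cs.
  exact: connect_trans (allP cs a (mem_head _ _)) (connect1 aw).
case: (pickP (fun w => e (last a s) w && (w \notin a :: s))) => [w /andP[lw wn]|no_last].
  apply: (IH a (rcons s w)); first by move: hn sz; rewrite size_rcons /=; lia.
  apply/and3P; split; first by rewrite rcons_path ps lw.
    by rewrite -rcons_cons rcons_uniq wn us.
  rewrite -rcons_cons all_rcons cs andbT.
  exact: connect_trans (allP cs _ (mem_last _ _)) (connect1 lw).
exists a, s; split => // w aw; apply/negPn/negP => wn.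
- by move: (no_head w); rewrite aw wn.
- by move: (no_last w); rewrite aw wn.
Qed.

(* With maximum degree two, a non-extendable path covers its component: an
   edge leaving the path at an inner vertex would give it three neighbours. *)
Lemma maximal_path_covers a s : max_degree_two e -> component_path a s ->
  (forall w, e a w -> w \in a :: s) -> (forall w, e (last a s) w -> w \in a :: s) ->
  forall x, (x \in component e x0) = (x \in a :: s).
Proof.
move=> deg2 /and3P[ps us cs] max_head max_last x.
apply/idP/idP => [|xp]; last by rewrite inE (allP cs x xp).
rewrite inE => cx; apply/negPn/negP => xn.
have ca : connect e a x.
  by apply: connect_trans cx; rewrite (sym_connect_sym esym) (allP cs a (mem_head _ _)).
have [u [w [up wn uw]]] := connect_exit_edge ca (mem_head _ _) xn.
set p := a :: s in up wn us.
have [k_gt0 k_last] : 0 < index u p /\ index u p != size s.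
  split; [rewrite lt0n; apply/eqP => k0 | apply/eqP => kl]; move/negP: wn; apply.
  - by apply: max_head; move: uw; rewrite -(nth_index a up) k0.
  - by apply: max_last; move: uw; rewrite -(nth_index a up) kl (last_nth a).
have kp : index u p < size p by rewrite index_mem.
have hu : nth a p (index u p) = u by rewrite nth_index.
move: (index u p) hu kp k_gt0 k_last => k hu kp k0 kl.
have kp' : k.+1 < size p by rewrite /= ltnS ltn_neqAle kl -ltnS.
have prev_edge : e u (nth a p k.-1).
  rewrite esym -hu; have := path_nth_edge a ps (i := k.-1).
  by rewrite prednK //; apply; exact: ltnW.
have next_edge : e u (nth a p k.+1) by rewrite -hu; exact: path_nth_edge.
have off_path i : i < size p -> nth a p i != w.
  by move=> ip; apply: contraNneq wn => <-; exact: (mem_nth a ip).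
apply: (deg2 _ _ _ _ prev_edge next_edge uw).
- by rewrite nth_uniq ?(leq_ltn_trans (leq_pred k)) //; lia.
- by rewrite off_path // (leq_ltn_trans (leq_pred k)).
- exact: off_path.
Qed.

End MaximalPath.

(* In a forest, a simple path through exactly the vertices of C makes the
   subgraph induced on C a path graph: its edges are the path's edges, since
   any other edge would be a chord. *)
Lemma spanning_path_is_path_graph (T : finType) (e : rel T) (C : {set T}) a s :
  symmetric e -> irreflexive e -> forest e ->
  path e a s -> uniq (a :: s) -> (forall x, (x \in C) = (x \in a :: s)) ->
  is_path_graph e C.
Proof.
move=> esym eirr hforest ps us cover; exists (a :: s); split => // x y xC yC.
rewrite cover in xC; rewrite cover in yC.
have sp : sorted e (a :: s) by [].
have hx : nth x (a :: s) (index x (a :: s)) = x by rewrite nth_index.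
have hy : nth x (a :: s) (index y (a :: s)) = y by rewrite nth_index.
have ix : index x (a :: s) < size (a :: s) by rewrite index_mem.
have iy : index y (a :: s) < size (a :: s) by rewrite index_mem.
split => [exy | [i ip /orP[] /andP[/eqP h1 /eqP h2]]].
- case: (ltngtP (index x (a :: s)) (index y (a :: s))) => [lt|gt|eq].
  + have := path_no_chord (d := x) hforest sp us lt iy; rewrite hx hy esym => /(_ exy) E.
    by exists (index x (a :: s)); rewrite -E ?hx ?hy ?eqxx.
  + have := path_no_chord (d := x) hforest sp us gt ix; rewrite hx hy => /(_ exy) E.
    by exists (index y (a :: s)); rewrite -E ?hx ?hy ?eqxx ?orbT.
  + by move: exy; rewrite -hx -hy eq eirr.
- by have := path_nth_edge x ps ip; rewrite h1 h2.
- by rewrite esym; have := path_nth_edge x ps ip; rewrite h1 h2.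
Qed.

(* A forest of maximum degree two is a disjoint union of paths: a
   non-extendable path in a component spans it. *)
Lemma max_degree_two_path_components (T : finType) (e : rel T) :
  symmetric e -> irreflexive e -> forest e -> max_degree_two e ->
  forall x : T, is_path_graph e (component e x).
Proof.
move=> esym eirr hforest deg2 x0.
have start : component_path e x0 x0 [::] by rewrite /component_path /= connect0.
have [a [s [cp max_head max_last]]] :=
  maximal_component_path esym (leqnn (#|T| - size [::])) start.
have cover := maximal_path_covers esym deg2 cp max_head max_last.
by case/and3P: cp => ps us _; exact: spanning_path_is_path_graph ps us cover.
Qed.

Theorem corollary1p10 (T : finType) (e : rel T)
  (esym : symmetric e) (eirr : irreflexive e) (hforest : forest e) :
  ind_complex_sortable e <-> (forall x : T, is_path_graph e (component e x)).
Proof.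
split.
- case=> lab [labI srt].
  apply: max_degree_two_path_components => //.
  exact: sortable_forest_max_degree_two labI srt.
- exact: sortable_of_path_components.
Qed.
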